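(* Let $n\ge 3$ and let $\mathcal D_n$ be a minimal DFA with state set $Q_n=\{0,\dots,n-1\}$ and initial state $0$ recognizing a left ideal, and let $T_n$ be its transition semigroup. If $|T_n|=n^{n-1}+n-1$, then $T_n=S_n$.
   Context: A left ideal is a nonempty $L\subseteq\Sigma^*$ with $L=\Sigma^*L$. The transition semigroup of a DFA is the set of transformations $q\mapsto\delta(q,w)$ of its state set induced by nonempty words $w$. Notation: for a transformation $t$, $qt$ is the image of $q$; $(p\to q)$ maps $p$ to $q$ and fixes all other states; $(Q_n\to q)$ is the constant map to $q$; $(p_0,\dots,p_{k-1})$ is the cyclic permutation $p_0\mapsto p_1\mapsto\cdots\mapsto p_{k-1}\mapsto p_0$ fixing all other states. $S_n$ (for $n\ge3$) is the transition semigroup of the DFA $\mathcal W_n$ with states $Q_n$, initial state $0$, final states $\{n-1\}$, alphabet $\{a,b,c,d,e\}$, where $a$ induces $(1,2,\dots,n-1)$, $b$ induces $(1,2)$, $c$ induces $(n-1\to 1)$, $d$ induces $(n-1\to 0)$, and $e$ induces $(Q_n\to 1)$. *)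

From mathcomp.classical Require Import boolp.
From mathcomp Require Import all_boot.

Set Implicit Arguments.
Unset Strict Implicit.
Unset Printing Implicit Defensive.

(* A complete DFA with state set Q_n = 'I_n = {0,...,n-1} over a finite
   alphabet A; the initial state is supplied separately. *)
Record dfa (n : nat) (A : finType) := Dfa {
  delta : 'I_n -> A -> 'I_n;
  final : {set 'I_n}
}.

Definition delta_star n A (D : dfa n A) (q : 'I_n) (w : seq A) : 'I_n :=
  foldl (delta D) q w.

Definition lang n A (D : dfa n A) (q0 : 'I_n) (w : seq A) : Prop :=
  delta_star D q0 w \in final D.

Definition left_ideal (A : Type) (L : seq A -> Prop) : Prop :=
  (exists w, L w) /\
  (forall x, L x <-> exists u w, x = u ++ w /\ L w).

Definition reachable n A (D : dfa n A) (q0 q : 'I_n) : Prop :=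
  exists w, delta_star D q0 w = q.

Definition distinguishable n A (D : dfa n A) (p q : 'I_n) : Prop :=
  exists w, (delta_star D p w \in final D) != (delta_star D q w \in final D).

Definition minimal n A (D : dfa n A) (q0 : 'I_n) : Prop :=
  (forall q, reachable D q0 q) /\
  (forall p q, p != q -> distinguishable D p q).

Definition word_trans n A (D : dfa n A) (w : seq A) : {ffun 'I_n -> 'I_n} :=
  [ffun q => delta_star D q w].

Definition trans_sg n A (D : dfa n A) : {set {ffun 'I_n -> 'I_n}} :=
  [set t | `[< exists w : seq A, w <> [::] /\ t = word_trans D w >]].

(* The witness DFA W_n (meaningful for n >= 3); letters a,b,c,d,e are
   0,1,2,3,4 : 'I_5.  [mk q k] is the state k (valid when k < n). *)
Definition mk n (q : 'I_n) (k : nat) : 'I_n := insubd q k.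

Definition W_delta (n : nat) (q : 'I_n) (x : 'I_5) : 'I_n :=
  match val x with
  | 0 => (* a : (1,2,...,n-1) *)
      if val q == 0 then q
      else if val q == n.-1 then mk q 1 else mk q (val q).+1
  | 1 => (* b : (1,2) *)
      if val q == 1 then mk q 2 else if val q == 2 then mk q 1 else q
  | 2 => (* c : (n-1 -> 1) *)
      if val q == n.-1 then mk q 1 else q
  | 3 => (* d : (n-1 -> 0) *)
      if val q == n.-1 then mk q 0 else q
  | _ => (* e : (Q_n -> 1) *)
      mk q 1
  end.

Definition W (n : nat) : dfa n 'I_5 :=
  Dfa (@W_delta n) [set q : 'I_n | val q == n.-1].

Definition S_sg (n : nat) : {set {ffun 'I_n -> 'I_n}} := trans_sg (W n).

From mathcomp.classical Require Import boolp.
From mathcomp Require Import all_boot fingroup perm.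
From mathcomp Require Import zify.

Set Implicit Arguments.
Unset Strict Implicit.
Unset Printing Implicit Defensive.

(* Order the states by p <= q iff every word accepted from p is also accepted
   from q.  Minimality makes this a partial order, the left-ideal property makes
   the initial state 0 its least element, and every transformation of T_n is
   monotone.  If some state p <> 0 lies strictly below a state q, there are
   fewer than n^(n-1) + n - 1 monotone maps: precomposing with the transposition
   (p,q) sends the monotone maps separating p and q injectively to non-monotone
   maps attaining their minimum at 0, and those maps are counted over the image
   of 0 against the up-sets of a chain.  Otherwise every element of T_n fixes 0
   or is constant; there are exactly n^(n-1) + n - 1 such maps, so T_n consists
   of all of them, and so does S_n, since (1,...,n-1) and (1,2) generate all
   permutations fixing 0 and (n-1 -> 1), (n-1 -> 0), (Q_n -> 1) supply the
   rest. *)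

Lemma bernoulli2 x k :
  x ^ k.+2 + k * x ^ k.+1 + 'C(k, 2) * x ^ k <= x ^ 2 * x.+1 ^ k.
Proof.
elim: k => [|k IH]; first by rewrite bin0n mul0n !addn0 expn0 muln1.
move: IH; rewrite binS bin1 !expnS; set a := x ^ k; set b := x.+1 ^ k.
nia.
Qed.

Lemma double_exp_le x k : 0 < x -> x <= k -> 2 * x ^ k <= x.+1 ^ k.
Proof.
move=> x_gt0 le_xk; rewrite -(@leq_pmul2l (x ^ 2)) ?expn_gt0 ?x_gt0 //.
apply: leq_trans (bernoulli2 x k); move: le_xk; rewrite !expnS.
set a := x ^ k; set c := 'C(k, 2); nia.
Qed.

Lemma double_exp_succ_le m : 4 <= m -> 2 * m.+1 ^ m <= m.+2 ^ m.
Proof.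
move=> m_ge4; rewrite -(@leq_pmul2l (m.+1 ^ 2)) ?expn_gt0 //.
have bin2_ge : m.+1 <= 'C(m, 2) by rewrite bin2; nia.
apply: leq_trans (bernoulli2 m.+1 m); move: bin2_ge; rewrite !expnS expn0 muln1.
set a := m.+1 ^ m; set c := 'C(m, 2); nia.
Qed.

Lemma sum_pow_le m j : j <= m ->
  \sum_(k < j) (k.+1 ^ m.+1 + k.+1 ^ m) <= j * j.+1 ^ m.
Proof.
elim: j => [|j IH] le_jm; first by rewrite big_ord0.
rewrite big_ord_recr /=; move: (IH (ltnW le_jm)) (double_exp_le (ltn0Sn j) le_jm).
rewrite expnS; set s := \sum_(k < j) _; set a := j.+1 ^ m; set b := j.+2 ^ m.
nia.
Qed.

Lemma sum_pow_bound m : 0 < m ->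
  m.+2 ^ m + \sum_(k < m.+1) (k.+1 ^ m.+1 + k.+1 ^ m) <= m.+2 ^ m.+1 + (2 * m).+1.
Proof.
move=> m_gt0; have [m_ge4 | m_lt4] := leqP 4 m.
  rewrite big_ord_recr /=; move: (sum_pow_le (leqnn m)) (double_exp_succ_le m_ge4).
  rewrite !expnS; set s := \sum_(k < m) _; set a := m.+1 ^ m; set b := m.+2 ^ m.
  nia.
by case: m m_gt0 m_lt4 => [|[|[|[|]]]] // _ _; rewrite !big_ord_recr big_ord0.
Qed.

Lemma card_fibers (X J : finType) (A : {set X}) (g : X -> J) :
  #|A| = \sum_(j : J) #|[set x in A | g x == j]|.
Proof.
rewrite -sum1_card (partition_big g predT) //; apply: eq_bigr => j _.
by rewrite -sum1_card; apply: eq_bigl => x; rewrite !inE.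
Qed.

Definition fix_or_const (T : finType) (z : T) : {set {ffun T -> T}} :=
  [set f : {ffun T -> T} | (f z == z) || [forall x, f x == f z]].

(* [fcomp t s] applies [t] first, matching the action of a concatenated word. *)
Definition fcomp (T : finType) (t s : {ffun T -> T}) : {ffun T -> T} :=
  [ffun x => s (t x)].

Lemma fix_or_const_comp (T : finType) (z : T) :
  {in fix_or_const z &, forall t s, fcomp t s \in fix_or_const z}.
Proof.
move=> t s; rewrite !inE !ffunE.
move=> /orP[/eqP tz | /forallP t_const] /orP[/eqP sz | /forallP s_const].
- by rewrite tz sz eqxx.
- by apply/orP; right; apply/forallP => x; rewrite !ffunE tz s_const.
- by apply/orP; right; apply/forallP => x; rewrite !ffunE (eqP (t_const x)).
- by apply/orP; right; apply/forallP => x; rewrite !ffunE (eqP (t_const x)).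
Qed.

Lemma card_fix_or_const (T : finType) (z : T) :
  #|fix_or_const z| = #|T| ^ #|T|.-1 + #|T|.-1.
Proof.
rewrite (card_fibers _ (fun f : {ffun T -> T} => f z)) (bigD1 z) //=; congr (_ + _).
  have -> : #|T| ^ #|T|.-1 = #|pffun_on z (predC1 z) predT|.
    by rewrite card_pffun_on cardC1.
  apply: eq_card => f; rewrite !inE; apply/andP/familyP => [[_ /eqP fz] x | f_on].
    by case: (eqVneq x z) => [-> | xz]; rewrite inE ?eqxx ?xz /= inE ?fz.
  by have := f_on z; rewrite inE eqxx /= inE => ->.
rewrite -(cardC1 z) -sum1_card; apply: eq_bigr => p pz.
rewrite -(cards1 ([ffun=> p] : {ffun T -> T})); apply: eq_card => f; rewrite !inE.
apply/andP/eqP => [[f_fc /eqP fzp] | ->]; last first.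
  by rewrite !ffunE eqxx; split=> //; apply/orP; right; apply/forallP => x; rewrite !ffunE.
case/orP: f_fc => [/eqP fz | /forallP f_const]; first by rewrite -fzp fz eqxx in pz.
by apply/ffunP => x; rewrite ffunE -fzp; apply/eqP.
Qed.

Section MonotoneMaps.
Variables (T : finType) (R : rel T).
Hypotheses (R_refl : reflexive R) (R_trans : transitive R) (R_anti : antisymmetric R).

Lemma exists_minimal (S : {set T}) x0 : x0 \in S ->
  exists2 m, m \in S & forall y, y \in S -> R y m -> y = m.
Proof.
move=> x0S; have [m mS min_m] := arg_minnP (fun x => #|[set y in S | R y x]|) x0S.
exists m => // y yS Rym; apply/eqP/negPn/negP => neq_ym.
suff: [set z in S | R z y] \proper [set z in S | R z m].
  by move/proper_card; rewrite ltnNge min_m.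
apply/properP; split.
  by apply/subsetP => z; rewrite !inE => /andP[-> Rzy]; apply: R_trans Rym.
exists m; first by rewrite inE R_refl andbT.
rewrite !inE negb_and; apply/orP; right; apply: contra neq_ym => Rmy.
by apply/eqP/R_anti; rewrite Rym.
Qed.

Lemma sum_upset_card_le (h : nat -> nat) (S : {set T}) :
  {homo h : x y / x <= y} ->
  \sum_(p in S) h #|[set y in S | R p y]| <= \sum_(i < #|S|) h i.+1.
Proof.
move=> h_mono; move cardS: #|S| => k; elim: k S cardS => [|k IH] S cardS.
  by move/eqP: cardS; rewrite big_ord0 cards_eq0 => /eqP->; rewrite big_set0.
have [x0 x0S] : exists x0, x0 \in S by apply/set0Pn; rewrite -cards_eq0 cardS.
have [m mS min_m] := exists_minimal x0S.
rewrite (bigD1 m mS) big_ord_recr /= addnC leq_add //; last first.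
  by apply/h_mono; rewrite -cardS subset_leq_card //; apply/subsetP => y /setIdP[].
have cardSm : #|S :\ m| = k by move: cardS; rewrite (cardsD1 m) mS => -[].
apply: leq_trans (IH _ cardSm).
apply: eq_leq; apply: eq_big => [p | p /andP[pS pm]]; first by rewrite !inE andbC.
congr (h _); apply: eq_card => y; rewrite !inE.
case: eqP => [-> | _] //=; rewrite mS /=; apply/negP => /(min_m p pS) pm_eq.
by rewrite pm_eq eqxx in pm.
Qed.

Variable z : T.
Hypothesis R_bot : forall x, R z x.
Local Notation fT := {ffun T -> T}.

Definition monotone_maps : {set fT} :=
  [set f : fT | [forall p, forall q, R p q ==> R (f p) (f q)]].

Lemma monotone_mapsP (f : fT) :
  reflect {homo f : p q / R p q} (f \in monotone_maps).
Proof.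
rewrite inE; apply: (iffP forallP) => [f_mono p q | f_mono p].
  by move/forallP: (f_mono p) => /(_ q)/implyP.
by apply/forallP => q; apply/implyP/f_mono.
Qed.

Lemma monotone_maps_sub_fix_or_const :
  (forall a b, a != z -> R a b -> a = b) -> monotone_maps \subset fix_or_const z.
Proof.
move=> R_disc; apply/subsetP => f /monotone_mapsP f_mono; rewrite inE.
have [// | fz_neq] := eqVneq (f z) z.
by apply/forallP => x; rewrite eq_sym; apply/eqP/R_disc/f_mono.
Qed.

Definition min_at_bottom : {set fT} := [set f : fT | [forall x, R (f z) (f x)]].

Definition upset p : {set T} := [set y | R p y].

Lemma monotone_sub_min_at_bottom : monotone_maps \subset min_at_bottom.
Proof.
apply/subsetP => f /monotone_mapsP f_mono; rewrite inE.
by apply/forallP => x; apply: f_mono.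
Qed.

Lemma card_min_at_bottom_fiber p :
  #|[set f in min_at_bottom | f z == p]| = #|upset p| ^ #|T|.-1.
Proof.
rewrite -(cardC1 z) -(card_pffun_on p); apply: eq_card => f; rewrite !inE.
apply/andP/familyP => [[/forallP f_min /eqP fz] x | f_on].
  by case: (eqVneq x z) => [-> | xz]; rewrite inE ?eqxx ?xz /= inE -fz ?f_min.
have fz : f z = p by have := f_on z; rewrite inE eqxx /= inE => /eqP.
split; last by rewrite fz.
apply/forallP => x; rewrite fz; have := f_on x.
by case: (eqVneq x z) => [-> | xz]; rewrite inE ?eqxx ?xz /= inE // => /eqP->.
Qed.

Lemma upset_bottom : upset z = setT.
Proof. by apply/setP => y; rewrite !inE R_bot. Qed.

Lemma card_upset_off_bottom p : p != z ->
  #|upset p| = #|[set y in [set~ z] | R p y]|.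
Proof.
move=> pz; apply: eq_card => y; rewrite !inE.
case: eqP => [-> | _] //=; apply: contraNF pz => R_pz.
by apply/eqP/R_anti; rewrite R_pz R_bot.
Qed.

Lemma card_min_at_bottom :
  #|min_at_bottom| = #|T| ^ #|T|.-1 + \sum_(p in [set~ z]) #|upset p| ^ #|T|.-1.
Proof.
rewrite (card_fibers _ (fun f : fT => f z)) (bigD1 z) //=.
rewrite card_min_at_bottom_fiber upset_bottom cardsT; congr (_ + _).
by apply: eq_big => [p | p _]; rewrite ?card_min_at_bottom_fiber // !inE.
Qed.

Lemma sum_upset_pow_le k :
  \sum_(p in [set~ z]) (#|upset p| ^ k.+1 + #|upset p| ^ k)
    <= \sum_(i < #|T|.-1) (i.+1 ^ k.+1 + i.+1 ^ k).
Proof.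
have exp_mono e : {homo (fun j => j ^ e) : i j / i <= j}.
  by case: e => [|e] i j le_ij; rewrite ?expn0 // leq_exp2r.
have h_mono : {homo (fun j => j ^ k.+1 + j ^ k) : i j / i <= j}.
  by move=> i j le_ij; rewrite leq_add ?exp_mono.
rewrite -(cardsC1 z); apply: leq_trans (sum_upset_card_le [set~ z] h_mono).
by apply/eq_leq/eq_bigr => p; rewrite !inE => /card_upset_off_bottom ->.
Qed.

Section StrictPair.
Variables a b : T.
Hypotheses (a_neq_z : a != z) (a_neq_b : a != b) (R_ab : R a b).

Lemma b_neq_z : b != z.
Proof. by apply: contraNneq a_neq_z => bz; apply/eqP/R_anti; rewrite R_bot -bz R_ab. Qed.

Definition precomp_tperm (f : fT) : fT := [ffun x => f (tperm a b x)].

Lemma precomp_tpermK : involutive precomp_tperm.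
Proof. by move=> f; apply/ffunP => x; rewrite !ffunE tpermK. Qed.

Lemma precomp_tperm_nonmonotone f : f \in monotone_maps -> f a != f b ->
  precomp_tperm f \in min_at_bottom :\: monotone_maps.
Proof.
move=> f_mono fab; have /monotone_mapsP f_hom := f_mono.
rewrite !inE; apply/andP; split.
  apply: contra fab => /forallP/(_ a)/forallP/(_ b)/implyP/(_ R_ab).
  by rewrite !ffunE tpermL tpermR => R_fba; apply/eqP/R_anti; rewrite R_fba f_hom.
apply/forallP => x; rewrite !ffunE tpermD ?(eq_sym z) ?b_neq_z //.
exact: f_hom.
Qed.

Lemma double_card_monotone_le :
  2 * #|monotone_maps| <= #|min_at_bottom| + #|[set f in min_at_bottom | f a == f b]|.
Proof.
set M := monotone_maps; set F := min_at_bottom; set Feq := [set f in F | _].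
have mono_sub : M \subset F := monotone_sub_min_at_bottom.
set Meq := [set f in M | f a == f b]; set Mneq := [set f in M | f a != f b].
have card_split : #|Meq| + #|Mneq| = #|M|.
  rewrite -(cardsID [set f : fT | f a == f b] M).
  by congr (_ + _); apply: eq_card => f; rewrite !inE // andbC.
have card_Mneq : #|Mneq| <= #|F| - #|M|.
  have sub_break : precomp_tperm @: Mneq \subset F :\: M.
    apply/subsetP => _ /imsetP[f /setIdP[f_mono fab] ->].
    exact: precomp_tperm_nonmonotone.
  move: (subset_leq_card sub_break).
  by rewrite card_imset ?cardsD ?(setIidPr mono_sub) //; apply: can_inj precomp_tpermK.
have card_Meq : #|Meq| <= #|Feq|.
  apply/subset_leq_card/subsetP => f /setIdP[f_mono fab].
  by apply/setIdP; split; first exact: (subsetP mono_sub).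
have := subset_leq_card mono_sub; lia.
Qed.

Lemma card_min_at_bottom_fiber_eq p :
  #|[set f in min_at_bottom | (f z == p) && (f a == f b)]| <= #|upset p| ^ #|T|.-2.
Proof.
have card_D : #|[set~ z] :\ b| = #|T|.-2.
  by move: (cardsD1 b [set~ z]); rewrite cardsC1 !inE b_neq_z; lia.
rewrite -card_D -(card_pffun_on p).
pose forget_b (f : fT) : fT := [ffun x => if x == b then p else f x].
have forget_inj : {in [set f in min_at_bottom | (f z == p) && (f a == f b)] &,
                    injective forget_b}.
  move=> f1 f2 /setIdP[_ /andP[_ /eqP f1ab]] /setIdP[_ /andP[_ /eqP f2ab]] eq_f.
  have eq_off_b x : x != b -> f1 x = f2 x.
    by move=> xb; move/ffunP/(_ x): eq_f; rewrite !ffunE (negbTE xb).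
  apply/ffunP => x; have [-> | xb] := eqVneq x b; last exact: eq_off_b.
  by rewrite -f1ab -f2ab eq_off_b.
rewrite -(card_in_imset forget_inj); apply/subset_leq_card/subsetP.
move=> _ /imsetP[f /setIdP[f_min /andP[/eqP fz _]] ->].
move: f_min; rewrite inE => /forallP f_min.
apply/familyP => x; rewrite !inE ffunE.
have [-> | xb] := eqVneq x b; first by rewrite /= inE.
have [-> | xz] := eqVneq x z; first by rewrite /= inE fz.
by rewrite /= inE -fz f_min.
Qed.

Lemma card_min_at_bottom_eq_le :
  #|[set f in min_at_bottom | f a == f b]|
    <= #|T| ^ #|T|.-2 + \sum_(p in [set~ z]) #|upset p| ^ #|T|.-2.
Proof.
rewrite (card_fibers _ (fun f : fT => f z)) (bigD1 z) //=.
have fiber_eq p : #|[set f in [set f in min_at_bottom | f a == f b] | f z == p]|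
                    <= #|upset p| ^ #|T|.-2.
  apply: leq_trans (card_min_at_bottom_fiber_eq p); apply/subset_leq_card/subsetP.
  by move=> f; rewrite !inE => /andP[/andP[-> ->] ->].
apply: leq_add; first by have := fiber_eq z; rewrite upset_bottom cardsT.
rewrite big_mkcond [X in _ <= X]big_mkcond /=; apply: leq_sum => p _.
by rewrite !inE; case: ifP.
Qed.

Theorem card_monotone_maps_lt : #|monotone_maps| < #|T| ^ #|T|.-1 + #|T| - 1.
Proof.
have [m cardT] : exists m, #|T| = m.+3.
  have card3 : #|(z |: [set a; b])| = 3.
    by rewrite cardsU1 cards2 !inE a_neq_b negb_or !(eq_sym z) a_neq_z b_neq_z.
  exists (#|T| - 3); have := subset_leq_card (subsetT (z |: [set a; b])).
  by rewrite card3 cardsT; lia.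
have := double_card_monotone_le; have := card_min_at_bottom_eq_le.
have := sum_upset_pow_le m.+1; have := sum_pow_bound (ltn0Sn m).
rewrite card_min_at_bottom !big_split /= cardT /=; lia.
Qed.

End StrictPair.
End MonotoneMaps.

Lemma pval_mul (T : finType) (s t : {perm T}) : pval (s * t)%g = fcomp (pval s) (pval t).
Proof. by apply/ffunP => x; rewrite ffunE !pvalE permM. Qed.

Definition arrow (T : finType) (p q : T) : {ffun T -> T} :=
  [ffun x => if x == p then q else x].

Lemma arrowJ (T : finType) (s : {perm T}) p q :
  fcomp (fcomp (pval s^-1) (arrow p q)) (pval s) = arrow (s p) (s q).
Proof.
apply/ffunP => x; rewrite !ffunE !pvalE (canF_eq (permKV s)).
by case: eqP => // _; rewrite permKV.
Qed.

Section TransitionSemigroup.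
Variables (n : nat) (A : finType) (D : dfa n A).

Lemma delta_star_cat p u w :
  delta_star D p (u ++ w) = delta_star D (delta_star D p u) w.
Proof. exact: foldl_cat. Qed.

Lemma word_trans_cat u w :
  word_trans D (u ++ w) = fcomp (word_trans D u) (word_trans D w).
Proof. by apply/ffunP => x; rewrite !ffunE delta_star_cat. Qed.

Lemma trans_sgP t :
  reflect (exists w, w <> [::] /\ t = word_trans D w) (t \in trans_sg D).
Proof. by rewrite inE; apply: asboolP. Qed.

Lemma letter_in_trans_sg x : word_trans D [:: x] \in trans_sg D.
Proof. by apply/trans_sgP; exists [:: x]. Qed.

Lemma trans_sg_comp : {in trans_sg D &, forall t s, fcomp t s \in trans_sg D}.
Proof.
move=> _ _ /trans_sgP[u [u_nil ->]] /trans_sgP[w [_ ->]].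
by apply/trans_sgP; exists (u ++ w); rewrite word_trans_cat; case: u u_nil.
Qed.

Lemma trans_sg_sub (M : {set {ffun 'I_n -> 'I_n}}) :
  (forall x, word_trans D [:: x] \in M) -> {in M &, forall t s, fcomp t s \in M} ->
  trans_sg D \subset M.
Proof.
move=> letter_in comp_in; apply/subsetP => _ /trans_sgP[w [+ ->]].
elim: w => [// | x w IH] _; case: w IH => [_ | y w IH]; first exact: letter_in.
by rewrite -cat1s word_trans_cat comp_in // IH.
Qed.

Definition state_le : rel 'I_n := fun p q =>
  `[< forall w, delta_star D p w \in final D -> delta_star D q w \in final D >].

Lemma state_leP p q : reflect
  (forall w, delta_star D p w \in final D -> delta_star D q w \in final D)
  (state_le p q).
Proof. exact: asboolP. Qed.

Lemma state_le_refl : reflexive state_le.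
Proof. by move=> p; apply/state_leP. Qed.

Lemma state_le_trans : transitive state_le.
Proof.
by move=> q p r /state_leP le_pq /state_leP le_qr; apply/state_leP => w /le_pq/le_qr.
Qed.

Lemma state_le_anti :
  (forall p q, p != q -> distinguishable D p q) -> antisymmetric state_le.
Proof.
move=> dist p q /andP[/state_leP le_pq /state_leP le_qp]; apply/eqP/negPn/negP.
by move=> /dist[w] /negP; apply; apply/eqP; apply/idP/idP => [/le_pq | /le_qp].
Qed.

Lemma trans_sg_monotone : trans_sg D \subset monotone_maps state_le.
Proof.
apply/subsetP => _ /trans_sgP[u [_ ->]]; apply/monotone_mapsP => p q /state_leP le_pq.
by apply/state_leP => w; rewrite !ffunE -!delta_star_cat => /le_pq.
Qed.

Lemma state_le_init q0 : (forall q, reachable D q0 q) -> left_ideal (lang D q0) ->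
  forall q, state_le q0 q.
Proof.
move=> reach [_ lid] q; have [u <-] := reach q; apply/state_leP => w w_acc.
by rewrite -delta_star_cat; apply/(lid (u ++ w)); exists u, w.
Qed.

End TransitionSemigroup.

Section Witness.
Variable m : nat.
Local Notation n := m.+3.
Local Notation S := (S_sg n).

Definition letter (i : nat) : {ffun 'I_n -> 'I_n} := word_trans (W n) [:: inord i].

Lemma letterE i x (lt_i5 : i < 5) : letter i x = W_delta x (Ordinal lt_i5).
Proof. by rewrite ffunE; congr W_delta; apply/val_inj; rewrite /= inordK. Qed.

Lemma mkE (q : 'I_n) k : k < n -> mk q k = inord k.
Proof. by move=> lt_kn; apply/ord_inj; rewrite inordK // /mk val_insubd lt_kn. Qed.

Lemma eq_val_inord (x : 'I_n) k : k < n -> ((x : nat) == k) = (x == inord k).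
Proof. by move=> lt_kn; apply/eqP/eqP => [<- | ->]; rewrite ?inord_val ?inordK. Qed.

Definition q1 : 'I_n := inord 1.
Definition q2 : 'I_n := inord 2.

Lemma val_letter0 x : (letter 0 x : nat) =
  if (x : nat) == 0 then 0 else if (x : nat) == m.+2 then 1 else x.+1.
Proof.
rewrite (letterE _ (isT : 0 < 5)) /W_delta /=.
case: eqP => // _; case: eqP => [_ | neq]; rewrite /mk val_insubd //.
have neq' : nat_of_ord x != m.+2 by apply/eqP.
by rewrite ifT //; have := ltn_ord x; lia.
Qed.

Lemma letter0_inj : injective (letter 0).
Proof.
move=> x y /(congr1 (@nat_of_ord _)); rewrite !val_letter0 => eq_xy; apply/ord_inj.
by move: eq_xy (ltn_ord x) (ltn_ord y); repeat case: eqP => ?; lia.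
Qed.

Definition acycle : {perm 'I_n} := perm letter0_inj.

Lemma pval_acycle : pval acycle = letter 0.
Proof. by apply/ffunP => x; rewrite pvalE permE. Qed.

Lemma acycle_expE k : k <= m.+1 -> (acycle ^+ k)%g q1 = inord k.+1.
Proof.
elim: k => [|k IH] le_km; first by rewrite expg0 perm1.
rewrite expgSr permM IH 1?ltnW // permE; apply/ord_inj.
have lt_kn : k.+1 < n by lia.
by rewrite val_letter0 !inordK //= ifN; lia.
Qed.

Lemma pval_tperm12 : pval (tperm q1 q2) = letter 1.
Proof.
apply/ffunP => x; rewrite pvalE (letterE _ (isT : 1 < 5)) /W_delta /=.
rewrite !eq_val_inord // !mkE //.
by case: tpermP => [-> | -> | /eqP/negPf-> /eqP/negPf->]; rewrite ?eqxx //; case: eqP.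
Qed.

Lemma letter2E : letter 2 = arrow ord_max q1.
Proof. by apply/ffunP => x; rewrite (letterE _ (isT : 2 < 5)) ffunE /W_delta /= mkE. Qed.

Lemma letter3E : letter 3 = arrow ord_max ord0.
Proof.
apply/ffunP => x; rewrite (letterE _ (isT : 3 < 5)) ffunE /W_delta /= mkE //.
by congr (if _ then _ else _); apply/ord_inj; rewrite inordK.
Qed.

Lemma letter4E : letter 4 = [ffun=> q1].
Proof. by apply/ffunP => x; rewrite (letterE _ (isT : 4 < 5)) ffunE /W_delta /= mkE. Qed.

Lemma letter_in i : letter i \in S.
Proof. exact: letter_in_trans_sg. Qed.

Definition S_perms : {set {perm 'I_n}} := [set s | pval s \in S].

Lemma mem_S_perms s : (s \in S_perms) = (pval s \in S).
Proof. exact: in_set. Qed.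

Lemma S_perms_group_set : group_set S_perms.
Proof.
apply/group_setP; split=> [|s t]; rewrite !mem_S_perms; last first.
  by move=> s_in t_in; rewrite pval_mul; exact: trans_sg_comp.
rewrite -(tperm2 q1 q2) pval_mul pval_tperm12.
exact: trans_sg_comp (letter_in 1) (letter_in 1).
Qed.

Canonical S_perms_group := Group S_perms_group_set.

Lemma tperm12_in : tperm q1 q2 \in S_perms.
Proof. by rewrite mem_S_perms pval_tperm12 letter_in. Qed.

Lemma acycle_in : acycle \in S_perms.
Proof. by rewrite mem_S_perms pval_acycle letter_in. Qed.

Lemma tperm_adj_in k : k <= m -> tperm (inord k.+1) (inord k.+2) \in S_perms.
Proof.
move=> le_km; have acycle_two : (acycle ^+ k)%g q2 = inord k.+2.
  by rewrite /q2 -(acycle_expE (isT : 1 <= m.+1)) expg1 -permM -expgS acycle_expE.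
rewrite -(acycle_expE (leqW le_km)) -acycle_two -tpermJ.
by rewrite groupJ ?groupX ?tperm12_in ?acycle_in.
Qed.

Lemma eq_inord i j : i < n -> j < n -> (inord i == inord j :> 'I_n) = (i == j).
Proof. by move=> lt_in lt_jn; apply/eqP/eqP => [/(congr1 val) | ->]; rewrite /= ?inordK. Qed.

Lemma tperm_q1_inord_in k : k.+2 < n -> tperm q1 (inord k.+2) \in S_perms.
Proof.
elim: k => [|k IH] lt_kn; first exact: tperm12_in.
have ne_k2 : inord k.+2 != q1 by rewrite /q1 eq_inord //; lia.
have ne_k3 : inord k.+3 != q1 by rewrite /q1 eq_inord.
rewrite tpermC -(tpermJ_tperm ne_k2 ne_k3) tpermC groupJ //; first by apply: IH; lia.
by apply: tperm_adj_in; lia.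
Qed.

Lemma tperm_q1_in y : y != ord0 -> tperm q1 y \in S_perms.
Proof.
move=> y0; have [-> | y1] := eqVneq y q1; first by rewrite tperm1 group1.
have y_gt1 : 1 < y.
  move: y0 y1; rewrite /q1 -(eq_val_inord _ (isT : 1 < n)) -val_eqE /= => y0 y1.
  by rewrite ltn_neqAle eq_sym y1 lt0n y0.
have lt_yn := ltn_ord y.
have -> : y = inord (y - 2).+2 by apply/ord_inj; rewrite inordK; lia.
by apply: tperm_q1_inord_in; lia.
Qed.

Lemma tperm_in x y : x != ord0 -> y != ord0 -> tperm x y \in S_perms.
Proof.
move=> x0 y0; have [-> | x1] := eqVneq x q1; first exact: tperm_q1_in.
have [-> | y1] := eqVneq y q1; first by rewrite tpermC tperm_q1_in.
have [-> | xy] := eqVneq x y; first by rewrite tperm1 group1.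
by rewrite -(tpermJ_tperm (x := q1) _ xy) 1?eq_sym // groupJ ?tperm_q1_in.
Qed.

Lemma conj_in s f : s \in S_perms -> f \in S ->
  fcomp (fcomp (pval s^-1) f) (pval s) \in S.
Proof.
move=> s_in f_in; have := groupVr s_in; rewrite !mem_S_perms in s_in * => s'_in.
by do 2!apply: trans_sg_comp => //.
Qed.

Lemma q1_neq0 : q1 != ord0.
Proof. by rewrite /q1 -(inord_val ord0) eq_inord. Qed.

Lemma q2_neq0 : q2 != ord0.
Proof. by rewrite /q2 -(inord_val ord0) eq_inord. Qed.

Lemma q1_neq_max : q1 != ord_max.
Proof. by rewrite /q1 -(inord_val ord_max) eq_inord. Qed.

Lemma arrow_in y t : y != ord0 -> arrow y t \in S.
Proof.
move=> y0; have [-> | ty] := eqVneq t y.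
  have -> : arrow y y = pval 1 by apply/ffunP => x; rewrite ffunE pvalE perm1; case: eqP.
  by rewrite -mem_S_perms group1.
have [-> | t0] := eqVneq t ord0.
  have := arrowJ (tperm ord_max y) ord_max ord0; rewrite tpermL tpermD // => <-.
  by rewrite conj_in ?tperm_in // -letter3E letter_in.
pose v := tperm ord_max y t.
have v0 : v != ord0 by rewrite (canF_eq (tpermK _ _)) tpermD.
have v_max : v != ord_max by rewrite (canF_eq (tpermK _ _)) tpermL.
have := arrowJ (tperm q1 v * tperm ord_max y) ord_max q1.
rewrite !permM (tpermD q1_neq_max v_max) !tpermL /v tpermK => <-.
by rewrite conj_in ?groupM ?tperm_in ?q1_neq0 // -letter2E letter_in.
Qed.

(* Either some point lies outside the image of f and is redirected by an arrow,
   or f is a permutation and a transposition undoes one of its moves. *)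
Lemma fix0_factor (f : {ffun 'I_n -> 'I_n}) : f ord0 = ord0 -> (exists x, f x != x) ->
  exists f' g, [/\ g \in S, f = fcomp f' g, f' ord0 = ord0
                 & [set x | f' x != x] \proper [set x | f x != x]].
Proof.
move=> f0 [x fx]; have [/existsP[y y_out] | surj] := boolP [exists y, y \notin codom f].
  have y0 : y != ord0 by apply: contraNneq y_out => ->; rewrite -f0 codom_f.
  have fy : f y != y by apply: contraNneq y_out => <-; rewrite codom_f.
  exists [ffun u => if u == y then y else f u], (arrow y (f y)); split.
  - exact: arrow_in.
  - apply/ffunP => u; rewrite !ffunE; case: (eqVneq u y) => [-> | uy]; rewrite ?eqxx //.
    by case: eqP => // fuy; move: y_out; rewrite -fuy codom_f.
  - by rewrite ffunE eq_sym (negbTE y0).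
  apply/properP; split; last by exists y; rewrite !inE ?ffunE ?eqxx.
  by apply/subsetP => u; rewrite !inE ffunE; case: (eqVneq u y) => [-> | _]; rewrite ?eqxx.
have f_inj : injective f.
  have : #|codom f| == #|'I_n|.
    by apply/eqP/eq_card => y; move/existsPn: surj => /(_ y); rewrite negbK => ->.
  by move/image_injP => f_inj u v; apply: f_inj.
have x0 : x != ord0 by apply: contraNneq fx => ->; rewrite f0.
have fx0 : f x != ord0 by rewrite -f0 (inj_eq f_inj).
exists (fcomp f (pval (tperm x (f x)))), (pval (tperm x (f x))); split.
- by rewrite -mem_S_perms tperm_in.
- by apply/ffunP => u; rewrite !ffunE !pvalE tpermK.
- by rewrite ffunE pvalE f0 tpermD // eq_sym.
apply/properP; split; last by exists x; rewrite !inE // ffunE pvalE tpermR eqxx.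
apply/subsetP => u; rewrite !inE ffunE pvalE; apply: contraNN => /eqP fu.
rewrite fu tpermD //; first by apply: contraNneq fx => ->; rewrite fu eqxx.
by apply: contraNneq fx => fxu; rewrite -(inj_eq f_inj) fxu fu.
Qed.

Lemma fix0_in (f : {ffun 'I_n -> 'I_n}) : f ord0 = ord0 -> f \in S.
Proof.
have [k] := ubnP #|[set x | f x != x]|; elim: k f => // k IH f lt_moved f0.
have [x fx | f_id] := pickP (fun x => f x != x).
  have [f' [g [g_in f_eq f'0 moved_lt]]] := fix0_factor f0 (ex_intro _ x fx).
  rewrite f_eq; apply: trans_sg_comp g_in; apply: IH f'0.
  by apply: leq_trans (proper_card moved_lt) _.
have -> : f = pval 1 by apply/ffunP => x; rewrite pvalE perm1; apply/eqP/negbFE/f_id.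
by rewrite -mem_S_perms group1.
Qed.

Lemma const_in p : [ffun=> p] \in S.
Proof.
have -> : [ffun=> p] = fcomp (letter 4) (arrow q1 p).
  by apply/ffunP => x; rewrite letter4E !ffunE eqxx.
by apply: trans_sg_comp; [exact: letter_in | exact: arrow_in q1_neq0].
Qed.

Lemma fix_or_const_sub : fix_or_const ord0 \subset S.
Proof.
apply/subsetP => f; rewrite inE => /orP[/eqP/fix0_in // | /forallP f_const].
have -> : f = [ffun=> f ord0] by apply/ffunP => x; rewrite ffunE; apply/eqP/f_const.
exact: const_in.
Qed.

Lemma letter_fix_or_const i : i < 5 -> letter i \in fix_or_const ord0.
Proof.
rewrite inE; case: i => [|[|[|[|[|//]]]]] _.
- by apply/orP; left; apply/eqP/ord_inj; rewrite val_letter0.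
- by apply/orP; left; rewrite -pval_tperm12 pvalE (tpermD q1_neq0 q2_neq0).
- by apply/orP; left; rewrite letter2E ffunE.
- by apply/orP; left; rewrite letter3E ffunE.
by rewrite letter4E; apply/orP; right; apply/forallP => x; rewrite !ffunE.
Qed.

Theorem S_sg_fix_or_const : S = fix_or_const ord0.
Proof.
apply/eqP; rewrite eqEsubset fix_or_const_sub andbT.
apply: trans_sg_sub; last exact: fix_or_const_comp.
by move=> x; rewrite -[x]inord_val; apply: letter_fix_or_const.
Qed.

End Witness.

Theorem theorem3 (n : nat) (A : finType) (D : dfa n A) (q0 : 'I_n) :
  3 <= n ->
  val q0 = 0 ->
  minimal D q0 ->
  left_ideal (lang D q0) ->
  #|trans_sg D| = n ^ n.-1 + n - 1 ->
  trans_sg D = S_sg n.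
Proof.
case: n A D q0 => [|[|[|m]]] // A D q0 _ q0_val [reach dist] lid card_T.
have q0E : q0 = ord0 by apply/val_inj.
have R_refl := @state_le_refl _ _ D; have R_trans := @state_le_trans _ _ D.
have R_anti := state_le_anti dist; have R_bot := state_le_init reach lid.
have T_mono := trans_sg_monotone D.
case: (boolP [exists a, exists b, [&& a != q0, a != b & state_le D a b]]).
  case/existsP=> a /existsP[b /and3P[a_q0 a_b R_ab]].
  have := card_monotone_maps_lt R_refl R_trans R_anti R_bot a_q0 a_b R_ab.
  by rewrite card_ord -card_T ltnNge subset_leq_card.
move=> /existsPn R_disc; rewrite S_sg_fix_or_const -q0E.
have T_sub : trans_sg D \subset fix_or_const q0.
  apply: subset_trans T_mono (monotone_maps_sub_fix_or_const R_bot _) => a b a_q0 R_ab.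
  by apply/eqP; move/existsPn: (R_disc a) => /(_ b); rewrite a_q0 R_ab andbT negbK.
by apply/eqP; rewrite eqEcard T_sub card_fix_or_const card_T card_ord /=; lia.
Qed.
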